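(* For every budget $B\ge 1$, every pool size bound $G$ and every population instance, $$\max_{T\in\mathcal T^B}u(T)\;\le\;4\,\max_{T\in\tilde{\mathcal T}^B}u(T).$$ That is, $\mathrm{gain}(B)\le 4$ for all $B\ge1$.
   Context: Population $[n]=\{1,\dots,n\}$. Individual $i$ is healthy with probability $q_i\in[0,1]$, independently across individuals, and has utility $u_i\ge 0$. For $S\subseteq[n]$, $q_S=\prod_{i\in S}q_i$ ($q_\emptyset=1$). A test is a set $t\subseteq[n]$ with $|t|\le G$; it is negative iff all its members are healthy. A testing regime with budget $B$ is a tuple $T=(t_1,\dots,t_B)$ of tests; $\mathcal T^B$ is the set of all such regimes, and $\tilde{\mathcal T}^B$ the set of non-overlapping ones (tests pairwise disjoint). $P^T_i$ is the probability that $i$ belongs to at least one negative test of $T$; welfare is $u(T)=\sum_{i}u_iP^T_i$. $\mathrm{gain}(B)$ is the supremum over instances of $\max_{T\in\mathcal T^B}u(T)/\max_{T\in\tilde{\mathcal T}^B}u(T)$. *)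

From HB Require Import structures.
From mathcomp Require Import all_boot all_order all_algebra.
Set Implicit Arguments. Unset Strict Implicit. Unset Printing Implicit Defensive.
Import Order.TTheory GRing.Theory Num.Theory.
Local Open Scope ring_scope.

(* Population 'I_n; a health outcome is the set H of healthy individuals.
   Individual i is healthy with probability q i, independently, so
   Pr[H] = prod_{i in H} q i * prod_{i notin H} (1 - q i). *)
Definition outcome_prob (R : realFieldType) (n : nat) (q : 'I_n -> R)
    (H : {set 'I_n}) : R :=
  (\prod_(i in H) q i) * \prod_(i in ~: H) (1 - q i).

Definition regime (n B : nat) := {ffun 'I_B -> {set 'I_n}}.

Definition valid_regime (n B G : nat) (T : regime n B) : bool :=
  [forall k, #|T k| <= G]%N.

Definition nonoverlapping (n B : nat) (T : regime n B) : bool :=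
  [forall k, forall l, (k != l) ==> [disjoint T k & T l]].

(* A test t is negative in outcome H iff all members are healthy (t \subset H).
   P^T_i = Pr[i belongs to at least one negative test of T]. *)
Definition prob_in_negative (R : realFieldType) (n B : nat) (q : 'I_n -> R)
    (T : regime n B) (i : 'I_n) : R :=
  \sum_(H : {set 'I_n} | [exists k, (i \in T k) && (T k \subset H)])
     outcome_prob q H.

Definition welfare (R : realFieldType) (n B : nat) (q u : 'I_n -> R)
    (T : regime n B) : R :=
  \sum_(i < n) u i * prob_in_negative q T i.

(* max over all regimes of size-<=G tests (welfare is >= 0, and the set is
   nonempty, so the 0 default is harmless) *)
Definition opt_welfare (R : realFieldType) (n B G : nat) (q u : 'I_n -> R) : R :=
  \big[Num.max/0]_(T : regime n B | valid_regime G T) welfare q u T.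

Definition opt_welfare_nonoverlap (R : realFieldType) (n B G : nat)
    (q u : 'I_n -> R) : R :=
  \big[Num.max/0]_(T : regime n B | valid_regime G T && nonoverlapping T)
     welfare q u T.

From HB Require Import structures.
From mathcomp Require Import all_boot all_order all_algebra.
From mathcomp Require Import ring lra.
Import Order.TTheory GRing.Theory Num.Theory.
Local Open Scope ring_scope.

(* Randomized rounding.  Fix a regime T, let Q_ik be the probability that the
   members of test k other than i are healthy, and Λ_i = Σ_{k ∋ i} Q_ik; by the
   union bound P^T_i <= q_i min(1, Λ_i).  Let each i keep, independently, the
   test k ∋ i with probability Q_ik / (2 max(1, Λ_i)) (and no test otherwise),
   and shrink every test to the individuals that kept it: the result is a
   non-overlapping regime.  The expected number of sick members keeping test k
   is at most half the probability that exactly one member of k is sick, hence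
   at most 1/2, so by the Weierstrass product inequality test k stays negative
   with probability at least 1/2 whatever i does.  Thus i ends up in a negative
   test with probability at least q_i Λ_i / (4 max(1, Λ_i)) >= P^T_i / 4, and
   averaging over the rounding gives u(T) <= 4 max_{T' non-overlapping} u(T'). *)

Lemma big_option (R : Type) (idx : R) (op : Monoid.com_law idx) (I : finType)
    (F : option I -> R) :
  \big[op/idx]_(o : option I) F o = op (F None) (\big[op/idx]_(i : I) F (Some i)).
Proof.
rewrite (bigD1 None) //=; congr (op _ _).
rewrite (reindex_omap Some (fun o => o)) //=; last by case.
by apply: eq_bigl => i; rewrite eqxx.
Qed.

Lemma sum_set_prod (R : comPzSemiRingType) (T : finType) (h : T -> bool -> R) :
  \sum_(A : {set T}) \prod_(x : T) h x (x \in A) = \prod_(x : T) (h x true + h x false).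
Proof.
under [RHS]eq_bigr do rewrite -big_bool.
rewrite bigA_distr_bigA (reindex (fun A : {set T} => [ffun x => x \in A])) /=.
  by apply: eq_bigr => A _; apply: eq_bigr => x _; rewrite ffunE.
exists (fun f : {ffun T -> bool} => [set x | f x]) => [A _|f _].
  by apply/setP => x; rewrite inE ffunE.
by apply/ffunP => x; rewrite ffunE inE.
Qed.

Lemma one_sub_sum_le_prod (R : realDomainType) (I : Type) (r : seq I) (P : pred I)
    (y : I -> R) :
  (forall i, P i -> 0 <= y i <= 1) ->
  1 - \sum_(i <- r | P i) y i <= \prod_(i <- r | P i) (1 - y i).
Proof.
move=> y01; elim: r => [|i r IHr]; first by rewrite !big_nil subr0.
rewrite !big_cons; case: ifP => // Pi.
have /andP[y0 y1] := y01 i Pi.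
set S := \sum_(j <- r | P j) y j; set Pr := \prod_(j <- r | P j) (1 - y j).
have S0 : 0 <= S by apply: sumr_ge0 => j /y01/andP[].
have : (1 - y i) * (1 - S) <= (1 - y i) * Pr by rewrite ler_wpM2l // subr_ge0.
nra.
Qed.

Section OutcomeProbability.
Variables (R : realFieldType) (n : nat) (q : 'I_n -> R).
Hypothesis q01 : forall i, 0 <= q i <= 1.

Let q_ge0 i : 0 <= q i. Proof. by case/andP: (q01 i). Qed.
Let subq_ge0 i : 0 <= 1 - q i.
Proof. by case/andP: (q01 i) => _; rewrite subr_ge0. Qed.

Lemma outcome_prob_ge0 H : 0 <= outcome_prob q H.
Proof. by rewrite mulr_ge0 //; apply: prodr_ge0. Qed.

Lemma outcome_probE H :
  outcome_prob q H = \prod_j (if j \in H then q j else 1 - q j).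
Proof.
rewrite /outcome_prob (bigID (mem H) predT) /=.
congr (_ * _); apply: eq_big => j; rewrite ?inE //.
  by move=> ->.
by move=> /negbTE ->.
Qed.

Lemma sum_outcome_prob_sub_disjoint (s r : {set 'I_n}) : [disjoint s & r] ->
  \sum_(H : {set 'I_n} | (s \subset H) && [disjoint r & H]) outcome_prob q H
  = \prod_(j in s) q j * \prod_(j in r) (1 - q j).
Proof.
move=> dsr.
pose h j (b : bool) :=
  if b then (if j \in r then 0 else q j) else (if j \in s then 0 else 1 - q j).
have termE (H : {set 'I_n}) :
    (if (s \subset H) && [disjoint r & H] then outcome_prob q H else 0)
    = \prod_j h j (j \in H).
  case: ifP => [/andP[/subsetP sH rH]|].
    rewrite outcome_probE; apply: eq_bigr => j _; rewrite /h.
    case: ifP => [jH|jH]; first by rewrite (disjointFl rH jH).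
    by case: ifP => // /sH; rewrite jH.
  move/negbT; rewrite negb_and => /orP[/subsetPn[j js /negbTE jH]|].
    by rewrite (bigD1 j) //= /h jH js mul0r.
  by case/pred0Pn => j /andP[/= jr jH]; rewrite (bigD1 j) //= /h jH jr mul0r.
rewrite big_mkcond (eq_bigr _ (fun H _ => termE H)) sum_set_prod.
rewrite (bigID (mem s) predT) /= (bigID (mem r) (fun j => j \notin s)) /=.
rewrite [X in _ * (_ * X)]big1; last first.
  by move=> j /andP[/negbTE js /negbTE jr]; rewrite /h js jr addrC subrK.
rewrite mulr1; congr (_ * _); apply: eq_big => j; rewrite /h //.
- by move=> js; rewrite (disjointFr dsr js) js addr0.
- by rewrite andb_idl // => jr; rewrite (disjointFl dsr jr).
- by move=> /andP[/negbTE js jr]; rewrite jr js add0r.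
Qed.

Lemma sum_outcome_prob_sub (s : {set 'I_n}) :
  \sum_(H : {set 'I_n} | s \subset H) outcome_prob q H = \prod_(j in s) q j.
Proof.
have set0_disjoint (A : {set 'I_n}) : [disjoint set0 & A].
  by apply: eq_disjoint0 => x; rewrite inE.
have := @sum_outcome_prob_sub_disjoint s set0; rewrite disjoint_sym.
rewrite big_set0 mulr1 => <- //.
by apply: eq_bigl => H; rewrite set0_disjoint andbT.
Qed.

Lemma sum_outcome_prob : \sum_(H : {set 'I_n}) outcome_prob q H = 1.
Proof.
have := sum_outcome_prob_sub set0; rewrite big_set0 => <-.
by apply: eq_bigl => H; rewrite sub0set.
Qed.

Lemma ler_sum_outcome_prob (P1 P2 : pred {set 'I_n}) :
  (forall H, P1 H -> P2 H) ->
  \sum_(H : {set 'I_n} | P1 H) outcome_prob q H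
  <= \sum_(H : {set 'I_n} | P2 H) outcome_prob q H.
Proof.
move=> P12; rewrite [X in _ <= X]big_mkcond [X in X <= _]big_mkcond /=.
apply: ler_sum => H _; case: ifP => [/P12 ->//|_].
by case: ifP => _; rewrite ?outcome_prob_ge0.
Qed.

(* The j-th summand is the probability that j is the only sick member of t;
   these events are disjoint. *)
Lemma sum_prob_single_sick_le1 (t : {set 'I_n}) :
  \sum_(j in t) \prod_(l in t :\ j) q l * (1 - q j) <= 1.
Proof.
pose E j (H : {set 'I_n}) := (t :\ j \subset H) && [disjoint [set j] & H].
have <- : \sum_(j in t) \sum_(H : {set 'I_n} | E j H) outcome_prob q H
          = \sum_(j in t) \prod_(l in t :\ j) q l * (1 - q j).
  apply: eq_bigr => j jt; rewrite sum_outcome_prob_sub_disjoint ?big_set1 //.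
  by rewrite disjoint_sym disjoints1 !inE eqxx.
rewrite -sum_outcome_prob; under eq_bigr do rewrite big_mkcond.
rewrite exchange_big /=; apply: ler_sum => H _.
case: (pickP [pred j | (j \in t) && E j H]) => [j0 /andP[j0t Ej0]|none]; last first.
  by rewrite big1 ?outcome_prob_ge0 // => j jt; have := none j; rewrite /= jt => /= ->.
rewrite (bigD1 j0) //= Ej0 big1 ?addr0 // => j /andP[jt jj0].
case: ifP => // /andP[/subsetP tjH _]; case/andP: Ej0 => _.
by rewrite disjoints1 tjH // !inE eq_sym jj0.
Qed.

Lemma prob_in_negative_ge0 B (T : regime n B) i : 0 <= prob_in_negative q T i.
Proof. by apply: sumr_ge0 => H _; apply: outcome_prob_ge0. Qed.

Lemma prob_in_negative_le B (T : regime n B) i : prob_in_negative q T i <= q i.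
Proof.
have := sum_outcome_prob_sub [set i]; rewrite big_set1 => <-.
apply: ler_sum_outcome_prob.
by move=> H /existsP[k /andP[ik /subsetP kH]]; rewrite sub1set kH.
Qed.

Lemma prob_in_negative_ge_test B (T : regime n B) i k : i \in T k ->
  \prod_(j in T k) q j <= prob_in_negative q T i.
Proof.
move=> ik; rewrite -sum_outcome_prob_sub; apply: ler_sum_outcome_prob => H kH.
by apply/existsP; exists k; rewrite ik.
Qed.

Lemma prob_in_negative_le_sum B (T : regime n B) i :
  prob_in_negative q T i <= \sum_(k | i \in T k) \prod_(j in T k) q j.
Proof.
under [X in _ <= X]eq_bigr do rewrite -sum_outcome_prob_sub big_mkcond.
rewrite exchange_big /= /prob_in_negative big_mkcond /=; apply: ler_sum => H _.
have term_ge0 k : 0 <= if T k \subset H then outcome_prob q H else 0.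
  by case: ifP; rewrite ?outcome_prob_ge0.
case: ifP => [/existsP[k0 /andP[ik0 k0H]]|_]; last exact: sumr_ge0.
by rewrite (bigD1 k0) //= k0H lerDl sumr_ge0.
Qed.

Section Rounding.
Variables (B : nat) (T : regime n B).

Definition others_healthy (i : 'I_n) (k : 'I_B) : R := \prod_(j in T k :\ i) q j.
Definition load (i : 'I_n) : R := \sum_(k | i \in T k) others_healthy i k.
Definition load_cap (i : 'I_n) : R := Num.max 1 (load i).

Definition pick (i : 'I_n) (k : 'I_B) : R :=
  if i \in T k then others_healthy i k / (2 * load_cap i) else 0.
(* The law of the test kept by [i]; [None] means that [i] keeps no test. *)
Definition choice_prob (i : 'I_n) (o : option 'I_B) : R :=
  if o is Some k then pick i k else 1 - \sum_k pick i k.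

Local Notation choice := {ffun 'I_n -> option 'I_B}.

Definition choice_weight (c : choice) : R := \prod_j choice_prob j (c j).
Definition round (c : choice) : regime n B :=
  [ffun k => [set j in T k | c j == Some k]].

Lemma others_healthy_ge0 i k : 0 <= others_healthy i k.
Proof. exact: prodr_ge0. Qed.

Lemma load_cap_ge1 i : 1 <= load_cap i.
Proof. by rewrite le_max lexx. Qed.

Lemma load_cap_gt0 i : 0 < load_cap i.
Proof. exact: lt_le_trans ltr01 (load_cap_ge1 i). Qed.

Lemma pick_ge0 i k : 0 <= pick i k.
Proof.
rewrite /pick; case: ifP => // _.
by rewrite divr_ge0 ?others_healthy_ge0 // mulr_ge0 // ltW ?load_cap_gt0.
Qed.

Lemma sum_pick i : \sum_k pick i k = load i / (2 * load_cap i).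
Proof.
rewrite /load mulr_suml [RHS]big_mkcond /=.
by apply: eq_bigr => k _; rewrite /pick; case: ifP; rewrite ?mul0r.
Qed.

Lemma sum_pick_le_half i : \sum_k pick i k <= 1 / 2.
Proof.
rewrite sum_pick ler_pdivrMr ?mulr_gt0 ?load_cap_gt0 //.
by rewrite mul1r mulrA mulVf ?mul1r ?pnatr_eq0 // le_max lexx orbT.
Qed.

Lemma pick_le_half i k : pick i k <= 1 / 2.
Proof.
apply: le_trans (sum_pick_le_half i); rewrite (bigD1 k) //= lerDl.
by apply: sumr_ge0 => k' _; apply: pick_ge0.
Qed.

Lemma choice_prob_ge0 i o : 0 <= choice_prob i o.
Proof.
case: o => [k|]; first exact: pick_ge0.
by rewrite subr_ge0 (le_trans (sum_pick_le_half i)) // ler_pdivrMr // mul1r ler1n.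
Qed.

Lemma sum_choice_prob i : \sum_o choice_prob i o = 1.
Proof. by rewrite big_option /= subrK. Qed.

Lemma choice_weight_ge0 c : 0 <= choice_weight c.
Proof. by apply: prodr_ge0 => j _; apply: choice_prob_ge0. Qed.

Lemma sum_choice_weight : \sum_c choice_weight c = 1.
Proof.
by rewrite -(bigA_distr_bigA choice_prob) big1 // => j _; apply: sum_choice_prob.
Qed.

Lemma round_valid G c : valid_regime G T -> valid_regime G (round c).
Proof.
move=> /forallP TG; apply/forallP => k; apply: leq_trans (TG k).
by apply/subset_leq_card/subsetP => j; rewrite ffunE inE => /andP[].
Qed.

Lemma round_nonoverlapping c : nonoverlapping (round c).
Proof.
apply/forallP => k; apply/forallP => l; apply/implyP => kl.
rewrite -setI_eq0; apply/eqP/setP => j; rewrite !ffunE !inE.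
apply/negbTE/negP => /andP[/andP[_ /eqP ck] /andP[_ /eqP cl]].
by move: kl; rewrite -(inj_eq Some_inj) -ck -cl eqxx.
Qed.

Lemma prob_in_negative_le_load i :
  prob_in_negative q T i <= q i * load i / load_cap i.
Proof.
have le_load : prob_in_negative q T i <= q i * load i.
  rewrite /load mulr_sumr; apply: le_trans (prob_in_negative_le_sum _ T i) _.
  by apply: ler_sum => k ik; rewrite (big_setD1 _ ik).
rewrite /load_cap; case: (leP (load i) 1) => [_|load_gt1]; first by rewrite divr1.
rewrite mulfK ?(gt_eqF (lt_trans ltr01 load_gt1)) //; exact: prob_in_negative_le.
Qed.

(* Given the choice [o] of [j], the probability that [j] does not make the
   shrunk test [k] positive. *)
Definition keep_prob (k : 'I_B) (j : 'I_n) (o : option 'I_B) : R :=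
  if (j \in T k) && (o == Some k) then q j else 1.

(* For a fixed choice [c]: the probability that the test kept by [i] is
   negative, a lower bound for [i]'s chance in the rounded regime. *)
Definition chosen_test_negative (c : choice) (i : 'I_n) : R :=
  \sum_(k | i \in T k) (c i == Some k)%:R * \prod_(j in round c k) q j.

Lemma prod_round c k : \prod_(j in round c k) q j = \prod_j keep_prob k j (c j).
Proof.
by rewrite big_mkcond; apply: eq_bigr => j _; rewrite ffunE inE /keep_prob; case: ifP.
Qed.

Lemma chosen_test_negative_le c i :
  chosen_test_negative c i <= prob_in_negative q (round c) i.
Proof.
rewrite /chosen_test_negative; case ci: (c i) => [k0|]; last first.
  by rewrite big1 ?prob_in_negative_ge0 // => k _; rewrite mul0r.
case: (boolP (i \in T k0)) => ik0; last first.
  rewrite big1 ?prob_in_negative_ge0 // => k ik; rewrite (inj_eq Some_inj).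
  by case: eqP => [k0k|_]; [rewrite k0k ik in ik0 | rewrite mul0r].
rewrite (bigD1 k0) //= [X in _ + X]big1 ?addr0; last first.
  by move=> k /andP[_ kk0]; rewrite (inj_eq Some_inj) eq_sym (negbTE kk0) mul0r.
rewrite eqxx mul1r; apply: prob_in_negative_ge_test.
by rewrite ffunE inE ik0 ci eqxx.
Qed.

Lemma sum_choice_prob_keep j k :
  \sum_o choice_prob j o * keep_prob k j o = 1 - pick j k * (1 - q j).
Proof.
rewrite big_option /= [X in _ + X](bigD1 k) //= [X in 1 - X](bigD1 k) //=.
have -> : keep_prob k j None = 1 by rewrite /keep_prob; case: ifP => // /andP[].
rewrite mulr1 /keep_prob eqxx andbT.
under [X in _ + (_ + X)]eq_bigr => k' k'k do
  rewrite (inj_eq Some_inj) (negbTE k'k) andbF mulr1.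
by rewrite /pick; case: ifP => _; ring.
Qed.

Lemma expected_keep_negative i k : i \in T k ->
  \sum_c choice_weight c * ((c i == Some k)%:R * \prod_(j in round c k) q j)
  = pick i k * q i * \prod_(j | j != i) (1 - pick j k * (1 - q j)).
Proof.
move=> ik.
pose h j o := choice_prob j o * keep_prob k j o *
              (if j == i then (o == Some k)%:R else 1).
have termE (c : choice) :
    choice_weight c * ((c i == Some k)%:R * \prod_(j in round c k) q j)
    = \prod_j h j (c j).
  rewrite prod_round /choice_weight /h !big_split /=.
  by rewrite -[X in _ = _ * X]big_mkcond big_pred1_eq; ring.
rewrite (eq_bigr _ (fun c _ => termE c)) -bigA_distr_bigA (bigD1 i) //=.
congr (_ * _).
  rewrite big_option /h /keep_prob /= eqxx mulr0 add0r (bigD1 k) //= eqxx ik mulr1.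
  by rewrite big1 ?addr0 // => k' k'k; rewrite (inj_eq Some_inj) (negbTE k'k) mulr0.
apply: eq_bigr => j ji; rewrite -sum_choice_prob_keep.
by apply: eq_bigr => o _; rewrite /h (negbTE ji) mulr1.
Qed.

Lemma sum_pick_sick_le_half k : \sum_j pick j k * (1 - q j) <= 1 / 2.
Proof.
rewrite (bigID (mem (T k))) /= [X in _ + X]big1 ?addr0; last first.
  by move=> j /negbTE jk; rewrite /pick jk mul0r.
apply: (@le_trans _ _ (\sum_(j in T k) others_healthy j k * (1 - q j) / 2)).
  apply: ler_sum => j jk; rewrite /pick jk.
  have -> : others_healthy j k / (2 * load_cap j) * (1 - q j)
            = others_healthy j k * (1 - q j) / 2 / load_cap j.
    by field; rewrite gt_eqF ?load_cap_gt0.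
  rewrite ler_pdivrMr ?load_cap_gt0 // ler_peMr ?load_cap_ge1 //.
  by rewrite divr_ge0 ?mulr_ge0 ?others_healthy_ge0.
rewrite -mulr_suml; have := sum_prob_single_sick_le1 (T k); rewrite /others_healthy.
lra.
Qed.

Lemma prod_keep_ge_half i k :
  1 / 2 <= \prod_(j | j != i) (1 - pick j k * (1 - q j)).
Proof.
have y01 j : j != i -> 0 <= pick j k * (1 - q j) <= 1.
  move=> _; have := pick_le_half j k; have := pick_ge0 j k; have := q01 j.
  case/andP=> q0 q1 p0 p1; apply/andP; split; nra.
apply: le_trans (@one_sub_sum_le_prod _ _ _ (fun j => j != i) _ y01).
have : \sum_(j | j != i) pick j k * (1 - q j) <= \sum_j pick j k * (1 - q j).
  by rewrite [X in _ <= X](bigD1 i) //= lerDr mulr_ge0 ?pick_ge0.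
have := sum_pick_sick_le_half k; lra.
Qed.

Lemma expected_chosen_test_negative i :
  q i * load i / load_cap i / 4
  <= \sum_c choice_weight c * chosen_test_negative c i.
Proof.
rewrite /chosen_test_negative; under eq_bigr do rewrite mulr_sumr.
rewrite exchange_big /=; under eq_bigr => k ik do rewrite expected_keep_negative //.
apply: (@le_trans _ _ (\sum_(k | i \in T k) pick i k * q i * (1 / 2))); last first.
  by apply: ler_sum => k _; rewrite ler_wpM2l ?mulr_ge0 ?pick_ge0 ?prod_keep_ge_half.
rewrite -!mulr_suml.
have -> : \sum_(k | i \in T k) pick i k = \sum_k pick i k.
  rewrite [RHS](bigID (fun k => i \in T k)) /= [X in _ = _ + X]big1 ?addr0 //.
  by move=> k /negbTE ik; rewrite /pick ik.
suff -> : q i * load i / load_cap i / 4 = load i / (2 * load_cap i) * q i * (1 / 2).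
  by rewrite sum_pick.
by field; rewrite gt_eqF ?load_cap_gt0.
Qed.

Lemma expected_chosen_le_expected_welfare (u : 'I_n -> R) :
  (forall i, 0 <= u i) ->
  \sum_i u i * \sum_c choice_weight c * chosen_test_negative c i
  <= \sum_c choice_weight c * welfare q u (round c).
Proof.
move=> u_ge0; rewrite /welfare; under [X in _ <= X]eq_bigr do rewrite mulr_sumr.
rewrite exchange_big /=; apply: ler_sum => i _; rewrite mulr_sumr.
apply: ler_sum => c _; rewrite mulrCA ler_wpM2l ?choice_weight_ge0 //.
by rewrite ler_wpM2l ?chosen_test_negative_le.
Qed.

Lemma expected_round_welfare_le G (u : 'I_n -> R) : valid_regime G T ->
  \sum_c choice_weight c * welfare q u (round c) <= opt_welfare_nonoverlap B G q u.
Proof.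
move=> TG; rewrite -[X in _ <= X]mul1r -sum_choice_weight mulr_suml.
apply: ler_sum => c _; rewrite ler_wpM2l ?choice_weight_ge0 //.
by apply: le_bigmax_cond; rewrite round_valid ?round_nonoverlapping.
Qed.

Lemma welfare_le_4_opt_nonoverlap G (u : 'I_n -> R) :
  (forall i, 0 <= u i) -> valid_regime G T ->
  welfare q u T <= 4 * opt_welfare_nonoverlap B G q u.
Proof.
move=> u_ge0 TG.
apply: (@le_trans _ _
  (4 * \sum_i u i * \sum_c choice_weight c * chosen_test_negative c i)).
  rewrite mulr_sumr; apply: ler_sum => i _; rewrite mulrCA ler_wpM2l //.
  have := expected_chosen_test_negative i; have := prob_in_negative_le_load i; lra.
rewrite ler_wpM2l // (le_trans (expected_chosen_le_expected_welfare _ u_ge0)) //.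
exact: expected_round_welfare_le.
Qed.

End Rounding.
End OutcomeProbability.

Theorem theorem1 (R : realFieldType) (n B G : nat) (q u : 'I_n -> R)
  (hB : (1 <= B)%N)
  (hq : forall i, 0 <= q i <= 1)
  (hu : forall i, 0 <= u i) :
  opt_welfare B G q u <= 4 * opt_welfare_nonoverlap B G q u.
Proof.
apply: bigmax_le => [|T TG]; first by rewrite mulr_ge0 ?bigmax_ge_id.
exact: welfare_le_4_opt_nonoverlap.
Qed.
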